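(* Let $(\mathbb V,g,J)$ be a (pseudo-)hermitian vector space and $A$ a hermitian endomorphism. Let $\varphi\in\mathcal K(\mathbb V)$ be an algebraic Kähler curvature tensor whose operator satisfies $[\varphi(X),A]=0$ for all $X\in\mathfrak u(g,J)$ (equivalently $[\varphi(x,y),A]=0$ for all $x,y\in\mathbb V$). Extend $\varphi$ complex-multilinearly to $\mathbb V^{\mathbb C}=\mathbb V\otimes_{\mathbb R}\mathbb C$ and, for each eigenvalue $\lambda$ of $A$, let $\mathbb V_\lambda\subseteq\mathbb V^{\mathbb C}$ be the generalized $\lambda$-eigenspace. Then $\varphi(x,y,u,v)=0$ whenever two of the vectors $x,y,u,v$ lie in $\mathbb V_\lambda$ and $\mathbb V_{\lambda'}$ respectively with $\lambda\ne\lambda'$ (and each of $x,y,u,v$ lies in some generalized eigenspace).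
   Context: (Pseudo-)hermitian vector space $(\mathbb V,g,J)$: nondegenerate symmetric $g$ of any signature, $J^2=-\mathrm{Id}$, $g(J\cdot,J\cdot)=g$; hermitian = $g$-symmetric, $J$-commuting; $\mathfrak u(g,J)$ = $g$-skew endomorphisms commuting with $J$. $\mathcal K(\mathbb V)$ is the space of $R\in\bigotimes^4\mathbb V^*$ with $R(x,y,u,v)=-R(y,x,u,v)=-R(x,y,v,u)$, $R(x,y,u,v)=R(u,v,x,y)$, $R(x,y,u,v)+R(x,v,y,u)+R(x,u,v,y)=0$, $R(x,y,u,v)=R(Jx,Jy,u,v)=R(x,y,Ju,Jv)$. Such $R$ is viewed as $(1,3)$ via $R(x,y,u,v)=g(x,R(u,v)y)$ and as an operator on $\mathfrak u(g,J)$ via $R(u\wedge_Jv)=4R(u,v)$, where $u\wedge v=g(u,\cdot)\otimes v-g(v,\cdot)\otimes u$, $u\wedge_Jv=u\wedge v+Ju\wedge Jv$. *)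

From HB Require Import structures.
From mathcomp Require Import all_boot all_order all_algebra.
Set Implicit Arguments. Unset Strict Implicit. Unset Printing Implicit Defensive.
Import Order.TTheory GRing.Theory Num.Theory.
Local Open Scope ring_scope.

(* Model: C is a numeric algebraically closed field (a model of the complex
   numbers, e.g. algC); its real elements form a real closed field playing the
   role of R.  The real vector space V = R^n is the set of column vectors in
   'cV[C]_n with real entries; 'cV[C]_n itself is the complexification
   V^C = V (x)_R C.  All real objects (g, J, A, phi) have real entries. *)

Definition realmx (C : numClosedFieldType) m k (M : 'M[C]_(m, k)) : Prop :=
  forall i j, M i j \is Num.real.

Definition realvec (C : numClosedFieldType) n (x : 'cV[C]_n) : Prop := realmx x.

Definition bform (C : numClosedFieldType) n (g : 'M[C]_n) (x y : 'cV[C]_n) : C :=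
  (x^T *m g *m y) 0 0.

Definition pseudo_hermitian (C : numClosedFieldType) n (g J : 'M[C]_n) : Prop :=
  [/\ realmx g, g^T = g & g \in unitmx] /\ [/\ realmx J, J *m J = - (1%:M) & (J^T *m g *m J) = g].

Definition hermitian_endo (C : numClosedFieldType) n (g J A : 'M[C]_n) : Prop :=
  [/\ realmx A, forall x y : 'cV[C]_n, bform g (A *m x) y = bform g x (A *m y)
    & A *m J = J *m A].

(* a 4-tensor on V given by its (real) coefficients; its evaluation is the
   complex-multilinear extension to V^C *)
Definition tensor4 (C : numClosedFieldType) n := 'I_n -> 'I_n -> 'I_n -> 'I_n -> C.

Definition teval (C : numClosedFieldType) n (phi : tensor4 C n) (x y u v : 'cV[C]_n) : C :=
  \sum_(i < n) \sum_(j < n) \sum_(k < n) \sum_(l < n)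
     phi i j k l * x i 0 * y j 0 * u k 0 * v l 0.

Definition kahler_curv (C : numClosedFieldType) n (J : 'M[C]_n) (phi : tensor4 C n) : Prop :=
  (forall i j k l, phi i j k l \is Num.real) /\
  forall x y u v : 'cV[C]_n, realvec x -> realvec y -> realvec u -> realvec v ->
  [/\ teval phi x y u v = - teval phi y x u v,
      teval phi x y u v = - teval phi x y v u
    & teval phi x y u v = teval phi u v x y] /\
  [/\ teval phi x y u v + teval phi x v y u + teval phi x u v y = 0,
      teval phi x y u v = teval phi (J *m x) (J *m y) u v
    & teval phi x y u v = teval phi x y (J *m u) (J *m v)].

Definition basisv (C : numClosedFieldType) n (a : 'I_n) : 'cV[C]_n :=
  \col_i (if i == a then 1 else 0).

(* the endomorphism phi(u,v), defined by phi(x,y,u,v) = g(x, phi(u,v) y) *)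
Definition curv_endo (C : numClosedFieldType) n (g : 'M[C]_n) (phi : tensor4 C n)
  (u v : 'cV[C]_n) : 'M[C]_n :=
  invmx g *m \matrix_(a < n, b < n) teval phi (@basisv C n a) (@basisv C n b) u v.

Definition is_eigenvalue (C : numClosedFieldType) n (A : 'M[C]_n) (lam : C) : Prop :=
  exists2 w : 'cV[C]_n, w != 0 & A *m w = lam *: w.

Definition in_gen_eigenspace (C : numClosedFieldType) n (A : 'M[C]_n) (lam : C)
  (x : 'cV[C]_n) : Prop :=
  exists k : nat, iter k (mulmx (A - lam%:M)) x = 0.

(* Write N_l = A - l for the shifted operators.  The hypothesis says that every curvature
   endomorphism phi(u,v) commutes with A; since A is g-symmetric, this makes A
   self-adjoint for each bilinear form (x,y) |-> phi(x,y,u,v).  For a self-adjoint A,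
   (mu - lam) B(x,y) = B(N_lam x, y) - B(x, N_mu y), so by induction on the nilpotency
   orders, generalized eigenvectors for distinct eigenvalues are B-orthogonal.  Hence
   phi(x,y,u,v) = 0 when x and y (or, by pair symmetry, u and v) lie in different
   generalized eigenspaces; in the remaining case, where x, y lie in V_lam and u, v in
   V_mu with lam != mu, the first Bianchi identity expresses phi(x,y,u,v) through
   two terms of the first kind. *)

From HB Require Import structures.
From mathcomp Require Import all_boot all_order all_algebra.
From mathcomp Require Import ring.
Import Order.TTheory GRing.Theory Num.Theory.
Local Open Scope ring_scope.
Set Implicit Arguments. Unset Strict Implicit.

Section SelfadjointForm.
Variables (F : fieldType) (n : nat) (M A : 'M[F]_n).
Hypothesis MA : M *m A = A^T *m M.

Lemma selfadjoint_shift (lam mu : F) (x y : 'cV[F]_n) :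
  (mu - lam) *: (x^T *m M *m y) =
  ((A - lam%:M) *m x)^T *m M *m y - x^T *m M *m ((A - mu%:M) *m y).
Proof.
have shiftM : (A - lam%:M)^T *m M = M *m (A - lam%:M).
  by rewrite linearB /= tr_scalar_mx mulmxBl mulmxBr MA scalar_mxC.
rewrite trmx_mul -(mulmxA x^T (A - lam%:M)^T) shiftM -!mulmxA -!mulmxBr -mulmxBl.
have -> : A - lam%:M - (A - mu%:M) = (mu - lam)%:M.
  by rewrite opprB addrC addrA subrK raddfB.
by rewrite mul_scalar_mx -!scalemxAr mulmxA.
Qed.

Lemma gen_eigenspace_orthogonal (lam mu : F) k m (x y : 'cV[F]_n) : lam != mu ->
  iter k (mulmx (A - lam%:M)) x = 0 -> iter m (mulmx (A - mu%:M)) y = 0 ->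
  x^T *m M *m y = 0.
Proof.
move=> lam_neq_mu; elim: k m x y => [|k IHk] m x y.
  by move=> /= -> _; rewrite trmx0 !mul0mx.
move=> Hx; elim: m y => [|m IHm] y Hy; first by rewrite /= in Hy; rewrite Hy mulmx0.
have /eqP := selfadjoint_shift lam mu x y.
rewrite (IHk m.+1 ((A - lam%:M) *m x) y) -?iterSr // (IHm ((A - mu%:M) *m y)) -?iterSr // subrr.
by rewrite scaler_eq0 subr_eq0 eq_sym (negPf lam_neq_mu) => /eqP.
Qed.

End SelfadjointForm.

Section CurvatureTensor.
Variables (C : numClosedFieldType) (n : nat) (phi : tensor4 C n).
Local Notation e := (@basisv C n).
Local Notation quad := ('I_n * ('I_n * ('I_n * 'I_n)))%type.

Lemma basisvE a i : e a i 0 = (i == a)%:R.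
Proof. by rewrite mxE; case: (i == a). Qed.

Lemma basisv_real a : realvec (e a).
Proof. by move=> i j; rewrite mxE; case: (i == a); rewrite ?real0 ?real1. Qed.

Lemma bform_basisv (N : 'M[C]_n) a b : bform N (e a) (e b) = N a b.
Proof.
have delta c : e c = delta_mx c 0.
  by apply/matrixP => i j; rewrite !mxE (ord1 j) eqxx andbT; case: (i == c).
by rewrite /bform !delta trmx_delta -rowE -colE !mxE.
Qed.

Lemma teval_flatten x y u v :
  teval phi x y u v = \sum_(p : quad) phi p.1 p.2.1 p.2.2.1 p.2.2.2 *
     x p.1 0 * y p.2.1 0 * u p.2.2.1 0 * v p.2.2.2 0.
Proof.
rewrite /teval.
under eq_bigr do under eq_bigr do rewrite pair_big /=.
by under eq_bigr do rewrite pair_big /=; rewrite pair_big.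
Qed.

Lemma teval_basisv a b c d : teval phi (e a) (e b) (e c) (e d) = phi a b c d.
Proof.
rewrite teval_flatten (bigD1 (a, (b, (c, d)))) //= !basisvE !eqxx !mulr1.
rewrite big1 ?addr0 // => -[i [j [k l]]] /=; rewrite !basisvE.
have [-> | ] := eqVneq i a; last by move=> _ _; rewrite !mulr0 ?mul0r.
have [-> | ] := eqVneq j b; last by move=> _ _; rewrite mulr0 !mul0r.
have [-> | ] := eqVneq k c; last by move=> _ _; rewrite mulr0 !mul0r.
by have [-> | _ _] := eqVneq l d; rewrite ?eqxx // mulr0.
Qed.

Lemma teval_pair_sym : (forall a b c d, phi a b c d = phi c d a b) ->
  forall x y u v, teval phi u v x y = teval phi x y u v.
Proof.
move=> pair_sym x y u v; rewrite !teval_flatten.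
rewrite (reindex_inj (h := fun p : quad => (p.2.2.1, (p.2.2.2, (p.1, p.2.1))))) /=.
  by apply: eq_bigr => p _; rewrite pair_sym; ring.
by move=> [i [j [k l]]] [i' [j' [k' l']]] /= [-> -> -> ->].
Qed.

Lemma teval_bianchi : (forall a b c d, phi a b c d + phi a d b c + phi a c d b = 0) ->
  forall x y u v, teval phi x y u v + teval phi x v y u + teval phi x u v y = 0.
Proof.
move=> bianchi x y u v; rewrite !teval_flatten.
rewrite [X in _ + X + _](reindex_inj
  (h := fun p : quad => (p.1, (p.2.2.2, (p.2.1, p.2.2.1))))) /=; last first.
  by move=> [i [j [k l]]] [i' [j' [k' l']]] /= [-> -> -> ->].
rewrite [X in _ + _ + X](reindex_inj
  (h := fun p : quad => (p.1, (p.2.2.1, (p.2.2.2, p.2.1))))) /=; last first.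
  by move=> [i [j [k l]]] [i' [j' [k' l']]] /= [-> -> -> ->].
rewrite -!big_split big1 //= => -[i [j [k l]]] _ /=.
transitivity ((phi i j k l + phi i l j k + phi i k l j) * (x i 0 * y j 0 * u k 0 * v l 0)).
  by ring.
by rewrite bianchi mul0r.
Qed.

Lemma kahler_curv_coef J : kahler_curv J phi ->
  (forall a b c d, phi a b c d = phi c d a b) /\
  (forall a b c d, phi a b c d + phi a d b c + phi a c d b = 0).
Proof.
move=> [_ sym]; have basis_sym a b c d := sym _ _ _ _
  (basisv_real a) (basisv_real b) (basisv_real c) (basisv_real d).
split=> a b c d; have [[_ _ E1] [E2 _ _]] := basis_sym a b c d.
  by rewrite !teval_basisv in E1.
by rewrite !teval_basisv in E2.
Qed.

Definition curv_coef_mx k l : 'M[C]_n := \matrix_(a, b) phi a b k l.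

Definition curv_form (u v : 'cV[C]_n) : 'M[C]_n :=
  \matrix_(a, b) \sum_(k < n) \sum_(l < n) phi a b k l * u k 0 * v l 0.

Lemma teval_curv_form x y u v : teval phi x y u v = bform (curv_form u v) x y.
Proof.
rewrite /teval /bform mxE.
under [RHS]eq_bigr do rewrite mxE big_distrl /=.
rewrite exchange_big /=; apply: eq_bigr => i _; apply: eq_bigr => j _.
rewrite !mxE big_distrr big_distrl /=; apply: eq_bigr => k _.
by rewrite big_distrr big_distrl /=; apply: eq_bigr => l _; ring.
Qed.

Lemma curv_formE u v :
  curv_form u v = \sum_(k < n) \sum_(l < n) (u k 0 * v l 0) *: curv_coef_mx k l.
Proof.
apply/matrixP => a b; rewrite !mxE summxE; apply: eq_bigr => k _.
by rewrite summxE; apply: eq_bigr => l _; rewrite !mxE; ring.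
Qed.

Lemma curv_endo_basisv (g : 'M[C]_n) k l :
  curv_endo g phi (e k) (e l) = invmx g *m curv_coef_mx k l.
Proof.
by congr (_ *m _); apply/matrixP => a b; rewrite !mxE teval_basisv.
Qed.

Lemma curv_form_selfadjoint (g A : 'M[C]_n) : g \in unitmx -> g *m A = A^T *m g ->
  (forall x y, realvec x -> realvec y ->
     curv_endo g phi x y *m A = A *m curv_endo g phi x y) ->
  forall u v, curv_form u v *m A = A^T *m curv_form u v.
Proof.
move=> g_unit gA endo_comm u v.
have coefA k l : curv_coef_mx k l *m A = A^T *m curv_coef_mx k l.
  move: (endo_comm _ _ (basisv_real k) (basisv_real l)).
  rewrite curv_endo_basisv => /(congr1 (mulmx g)).
  by rewrite !mulmxA (mulmxV g_unit) mul1mx gA -(mulmxA A^T) (mulmxV g_unit) mulmx1.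
rewrite curv_formE mulmx_suml mulmx_sumr; apply: eq_bigr => k _.
rewrite mulmx_suml mulmx_sumr; apply: eq_bigr => l _.
by rewrite -scalemxAl coefA scalemxAr.
Qed.

End CurvatureTensor.

Lemma hermitian_endo_selfadjoint (C : numClosedFieldType) n (g J A : 'M[C]_n) :
  hermitian_endo g J A -> g *m A = A^T *m g.
Proof.
case=> _ gsym _; apply/matrixP => i j.
have bformM x y : bform g (A *m x) y = bform (A^T *m g) x y.
  by rewrite /bform trmx_mul !mulmxA.
move: (gsym (basisv C i) (basisv C j)).
rewrite bformM bform_basisv /bform mulmxA -(mulmxA _ g A).
by rewrite -/(bform (g *m A) _ _) bform_basisv.
Qed.

Unset Implicit Arguments. Set Strict Implicit.

Theorem mainTheorem7 (C : numClosedFieldType) (n : nat) (g J A : 'M[C]_n)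
  (phi : tensor4 C n) :
  pseudo_hermitian g J ->
  hermitian_endo g J A ->
  kahler_curv J phi ->
  (forall x y : 'cV[C]_n, realvec x -> realvec y ->
     curv_endo g phi x y *m A = A *m curv_endo g phi x y) ->
  forall (lx ly lu lv : C) (x y u v : 'cV[C]_n),
    is_eigenvalue A lx -> is_eigenvalue A ly ->
    is_eigenvalue A lu -> is_eigenvalue A lv ->
    in_gen_eigenspace A lx x -> in_gen_eigenspace A ly y ->
    in_gen_eigenspace A lu u -> in_gen_eigenspace A lv v ->
    ~ (lx = ly /\ ly = lu /\ lu = lv) ->
    teval phi x y u v = 0.
Proof.
move=> [[_ _ g_unit] _] /hermitian_endo_selfadjoint gA kahler endo_comm.
have [pair_sym bianchi] := kahler_curv_coef kahler.
move=> lx ly lu lv x y u v _ _ _ _ [kx Hx] [ky Hy] [ku Hu] [kv Hv] not_all_eq.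
have orth l1 l2 k1 k2 w1 w2 w3 w4 : l1 != l2 ->
    iter k1 (mulmx (A - l1%:M)) w1 = 0 -> iter k2 (mulmx (A - l2%:M)) w2 = 0 ->
    teval phi w1 w2 w3 w4 = 0.
  move=> l1_neq_l2 H1 H2; rewrite teval_curv_form /bform.
  have formA := curv_form_selfadjoint g_unit gA endo_comm w3 w4.
  by rewrite (gen_eigenspace_orthogonal formA l1_neq_l2 H1 H2) mxE.
have [exy | /orth nxy] := eqVneq lx ly; last exact: nxy Hx Hy.
have [euv | /orth nuv] := eqVneq lu lv; last first.
  by rewrite -teval_pair_sym //; exact: nuv Hu Hv.
have nxu : lx != lu by apply/eqP => exu; apply: not_all_eq; rewrite -exy.
have nxv : lx != lv by rewrite -euv.
have := teval_bianchi bianchi x y u v.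
by rewrite (orth _ _ _ _ _ _ _ _ nxv Hx Hv) (orth _ _ _ _ _ _ _ _ nxu Hx Hu) !addr0.
Qed.
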